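(* Let $n\le k$ be positive integers. For every $\sigma$-structure $\mathcal{A}$: (a) there is a (unique) homomorphism $\epsilon^{n,k}_{\mathcal{A}}:\mathbb{H}_{n,k}\mathcal{A}\to\mathcal{A}$ with $\epsilon_{\mathcal{A}}=\epsilon^{n,k}_{\mathcal{A}}\circ q_n$; (b) the map $q_n\circ\mathbb{T}_kq_n\circ\delta_{\mathcal{A}}:\mathbb{T}_k\mathcal{A}\to\mathbb{H}_{n,k}\mathbb{H}_{n,k}\mathcal{A}$ is constant on $\approx_n$-classes, so it induces a well-defined map $\delta^{n,k}_{\mathcal{A}}:\mathbb{H}_{n,k}\mathcal{A}\to\mathbb{H}_{n,k}\mathbb{H}_{n,k}\mathcal{A}$ with $\delta^{n,k}_{\mathcal{A}}\circ q_n=q_n\circ\mathbb{T}_kq_n\circ\delta_{\mathcal{A}}$. The families $\epsilon^{n,k}$ and $\delta^{n,k}$ are natural transformations $\mathbb{H}_{n,k}\Rightarrow\mathrm{Id}$ and $\mathbb{H}_{n,k}\Rightarrow\mathbb{H}_{n,k}\mathbb{H}_{n,k}$ on the category of $\sigma$-structures and homomorphisms.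
   Context: For $m\in\mathbb{N}$, $[m]=\{1,\dots,m\}$. For a $\sigma$-structure $\mathcal{A}$, $\mathbb{T}_k\mathcal{A}$ has universe the nonempty finite lists over $A\times[k]$; $\epsilon_{\mathcal{A}}(s)$ is the first component of the last pair of $s$; $(s_1,\dots,s_r)\in R^{\mathbb{T}_k\mathcal{A}}$ iff the $s_i$ are pairwise prefix-comparable, $(\epsilon_{\mathcal{A}}(s_1),\dots,\epsilon_{\mathcal{A}}(s_r))\in R^{\mathcal{A}}$, and whenever $s_i$ is a prefix of $s_j$ ending with $(a,p)$, no prefix of $s_j$ properly extending $s_i$ ends with a pair $(a',p)$. For a homomorphism $f$, $\mathbb{T}_kf$ applies $f$ to first components. $\delta_{\mathcal{A}}[(a_1,p_1),\dots,(a_m,p_m)]=[(s_1,p_1),\dots,(s_m,p_m)]$ with $s_i=[(a_1,p_1),\dots,(a_i,p_i)]$ (these are the counit and comultiplication of the pebbling comonad $\mathbb{T}_k$). A list over $A\times[k]$ is basic if it has at most $n$ pairs with distinct pebble indices; $S_n(s)=[s]$ if $s$ is basic, else $S_n(s)=[a];S_n(t)$ with $s=a\cdot t$ and $a$ the longest basic prefix. For $p\in[k]$ and $S_n(s)=t;[s']$ ($s'$ the last block), $\alpha_n(s,p)=t;[s']$ if $|s'|=n$ or $p$ occurs in $s'$, else $t$. $[s;(a,i)]\approx_n[t;(b,j)]$ iff $a=b$ and $\alpha_n(s,i)=\alpha_n(t,j)$. $\mathbb{H}_{n,k}\mathcal{A}=\mathbb{T}_k\mathcal{A}/{\approx_n}$,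 where a tuple of classes is related iff some choice of representatives is related in $\mathbb{T}_k\mathcal{A}$; $q_n$ denotes the quotient map $\mathbb{T}_k\mathcal{C}\to\mathbb{H}_{n,k}\mathcal{C}$ for any structure $\mathcal{C}$; $\mathbb{H}_{n,k}f$ is the map induced by $\mathbb{T}_kf$. *)

From Stdlib Require Import ClassicalEpsilon.
From mathcomp Require Import all_boot.
Set Implicit Arguments. Unset Strict Implicit. Unset Printing Implicit Defensive.

Record signature := Signature { sym : Type; ar : sym -> nat }.

Record structure (sg : signature) := Structure {
  car :> Type;
  rel : forall R : sym sg, ('I_(ar R) -> car) -> Prop }.

Definition is_hom (sg : signature) (A B : structure sg) (f : A -> B) : Prop :=
  forall (R : sym sg) (t : 'I_(ar R) -> A), @rel _ A R t -> @rel _ B R (fun i => f (t i)).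

Section Pebbling.
Variable k : nat.

(* Pebble indices [k] are represented by 'I_k (0-based). *)
(* A nonempty list over X * [k] is represented as a pair (s, x) standing for
   the list  rcons s x  (= s ; x). *)
Definition Tcar (X : Type) := (seq (X * 'I_k) * (X * 'I_k))%type.

Definition tolist (X : Type) (u : Tcar X) : seq (X * 'I_k) := rcons u.1 u.2.

Definition is_prefix (Y : Type) (l1 l2 : seq Y) : Prop := exists w, l2 = l1 ++ w.

Definition comparable (Y : Type) (l1 l2 : seq Y) : Prop :=
  is_prefix l1 l2 \/ is_prefix l2 l1.

Definition eps (X : Type) (u : Tcar X) : X := u.2.1.

Definition peb_cond (X : Type) (u v : Tcar X) : Prop :=
  forall (w : seq (X * 'I_k)) (y : X * 'I_k),
    is_prefix (tolist u ++ rcons w y) (tolist v) -> y.2 <> u.2.2.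

Definition T (sg : signature) (A : structure sg) : structure sg :=
  @Structure sg (Tcar A) (fun R t =>
    (forall i j, comparable (tolist (t i)) (tolist (t j))) /\
    @rel _ A R (fun i => eps (t i)) /\
    (forall i j, peb_cond (t i) (t j))).

Definition Tmap (X Y : Type) (f : X -> Y) (u : Tcar X) : Tcar Y :=
  (map (fun y => (f y.1, y.2)) u.1, (f u.2.1, u.2.2)).

(* comultiplication: delta [(a1,p1),...,(am,pm)] = [(s1,p1),...,(sm,pm)] *)
Definition delta (X : Type) (u : Tcar X) : Tcar (Tcar X) :=
  ([seq ((take i u.1, nth u.2 u.1 i), (nth u.2 u.1 i).2) | i <- iota 0 (size u.1)],
   (u, u.2.2)).

Variable n : nat.

Definition basicb (X : Type) (s : seq (X * 'I_k)) : bool :=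
  (size s <= n) && uniq (map snd s).

Definition lbp (X : Type) (s : seq (X * 'I_k)) : nat :=
  \max_(m < (size s).+1 | basicb (take m s)) m.

Fixpoint blocks_fuel (X : Type) (fuel : nat) (s : seq (X * 'I_k))
  : seq (seq (X * 'I_k)) :=
  match fuel with
  | 0 => [:: s]
  | f.+1 => if basicb s then [:: s]
            else take (lbp s) s :: blocks_fuel f (drop (lbp s) s)
  end.

Definition Sn (X : Type) (s : seq (X * 'I_k)) := blocks_fuel (size s) s.

Definition alpha (X : Type) (s : seq (X * 'I_k)) (p : 'I_k) : seq (seq (X * 'I_k)) :=
  let bl := Sn s in
  let t := take (size bl).-1 bl in
  let s' := last [::] bl in
  if (size s' == n) || (p \in map snd s') then bl else t.

Definition approx (X : Type) (u v : Tcar X) : Prop :=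
  u.2.1 = v.2.1 /\ alpha u.1 u.2.2 = alpha v.1 v.2.2.

Definition Hcar (X : Type) := {P : Tcar X -> Prop | exists u, P = approx u}.

Definition q (X : Type) (u : Tcar X) : Hcar X :=
  exist _ (approx u) (ex_intro _ u erefl).

Definition H (sg : signature) (A : structure sg) : structure sg :=
  @Structure sg (Hcar A) (fun R t =>
    exists t' : 'I_(ar R) -> Tcar A, (forall i, q (t' i) = t i) /\ @rel _ (T A) R t').

Definition rep (X : Type) (c : Hcar X) : Tcar X :=
  proj1_sig (constructive_indefinite_description _ (proj2_sig c)).

Definition Hmap (X Y : Type) (f : X -> Y) (c : Hcar X) : Hcar Y :=
  q (Tmap f (rep c)).

End Pebbling.

Arguments q {k} n {X} u.
Arguments Hmap {k} n {X Y} f c.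
Arguments approx {k} n {X} u v.

(* The block decomposition [Sn], hence [alpha], reads only the pebble indices of a
   list: [alpha n s p] is [s] cut along a shape computed from its pebbles, and it
   covers only a prefix of [s].  So [approx]-equivalent lists share that prefix,
   and every operation that preserves pebble indices and commutes with taking
   prefixes (mapping first components, forming the list of prefixes [delta])
   respects [approx].  Hence [eps] and [q n \o Tmap (q n) \o delta] factor through
   [q n].  They are homomorphisms because a tuple of classes is related iff some
   tuple of representatives is, and because [Tmap g \o delta] preserves the
   relations of [T] whenever [g] does. *)

From Pilot Require Import Defs.
From mathcomp Require Import all_boot zify.
From Stdlib Require Import FunctionalExtensionality PropExtensionality ProofIrrelevance ClassicalEpsilon.
Set Implicit Arguments. Unset Strict Implicit. Unset Printing Implicit Defensive.

Lemma take_reshape (T : Type) (sh : seq nat) (s : seq T) m :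
  take m (reshape sh s) = reshape (take m sh) s.
Proof. by elim: sh s m => [|x sh IH] s [|m] //=; rewrite IH. Qed.

Lemma reshape_take_sumn (T : Type) (sh : seq nat) (s : seq T) :
  reshape sh (take (sumn sh) s) = reshape sh s.
Proof.
elim: sh s => [|x sh IH] s //=.
by rewrite take_takel ?leq_addr // addnC -take_drop IH.
Qed.

Lemma flatten_reshape (T : Type) (sh : seq nat) (s : seq T) :
  flatten (reshape sh s) = take (sumn sh) s.
Proof.
elim: sh s => [|x sh IH] s /=; first by rewrite take0.
by rewrite IH -takeD.
Qed.

Lemma shape_map_snd (X Y : Type) (bl : seq (seq (X * Y))) :
  shape bl = map size (map (map snd) bl).
Proof. by rewrite -map_comp; apply: eq_map => b /=; rewrite size_map. Qed.

Section Blocks.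
Variables k n : nat.

Lemma basicb_eq_snd X Y (s : seq (X * 'I_k)) (s' : seq (Y * 'I_k)) :
  map snd s = map snd s' -> basicb n s = basicb n s'.
Proof. by move=> E; rewrite /basicb -(size_map snd s) -(size_map snd s') E. Qed.

Lemma lbp_eq_snd X Y (s : seq (X * 'I_k)) (s' : seq (Y * 'I_k)) :
  map snd s = map snd s' -> lbp n s = lbp n s'.
Proof.
move=> E; rewrite /lbp -(size_map snd s) -(size_map snd s') E.
by apply: eq_bigl => m; apply: basicb_eq_snd; rewrite !map_take E.
Qed.

Lemma blocks_fuel_eq_snd X Y fuel (s : seq (X * 'I_k)) (s' : seq (Y * 'I_k)) :
  map snd s = map snd s' ->
  map (map snd) (blocks_fuel n fuel s) = map (map snd) (blocks_fuel n fuel s').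
Proof.
elim: fuel s s' => [|f IH] s s' E /=; first by rewrite E.
rewrite (basicb_eq_snd E) (lbp_eq_snd E); case: ifP => _ /=; first by rewrite E.
by rewrite !map_take E (IH _ (drop (lbp n s') s')) // !map_drop E.
Qed.

Lemma Sn_eq_snd X Y (s : seq (X * 'I_k)) (s' : seq (Y * 'I_k)) :
  map snd s = map snd s' -> map (map snd) (Sn n s) = map (map snd) (Sn n s').
Proof.
by move=> E; rewrite /Sn -(size_map snd s) -(size_map snd s') -E; apply: blocks_fuel_eq_snd.
Qed.

Lemma flatten_Sn X (s : seq (X * 'I_k)) : flatten (Sn n s) = s.
Proof.
rewrite /Sn; move: (size s) => f; elim: f s => [|f IH] s /=; first by rewrite cats0.
by case: ifP => _ /=; rewrite ?cats0 ?IH ?cat_take_drop.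
Qed.

Lemma Sn_reshape X (s : seq (X * 'I_k)) : reshape (shape (Sn n s)) s = Sn n s.
Proof. by rewrite -{2}(flatten_Sn s) flattenK. Qed.

Lemma alpha_eq_snd X Y (s : seq (X * 'I_k)) (s' : seq (Y * 'I_k)) p :
  map snd s = map snd s' -> alpha n s' p = reshape (shape (alpha n s p)) s'.
Proof.
move=> E; have ES := Sn_eq_snd E.
have Eshape : shape (Sn n s) = shape (Sn n s') by rewrite !shape_map_snd ES.
have Elast : map snd (last [::] (Sn n s)) = map snd (last [::] (Sn n s')).
  by rewrite -!(last_map (map snd)) ES.
rewrite /alpha -(size_map snd (last _ (Sn n s))) Elast size_map.
case: ifP => _; first by rewrite Eshape Sn_reshape.
by rewrite -(Sn_reshape s') -Eshape size_reshape take_reshape /shape map_take size_map.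
Qed.

Lemma alpha_reshape X (s : seq (X * 'I_k)) p :
  reshape (shape (alpha n s p)) s = alpha n s p.
Proof. by rewrite -alpha_eq_snd. Qed.

(* [alpha] only depends on a prefix of the list, which [alpha]-equal lists share. *)
Lemma alpha_transfer X Y (F : seq (X * 'I_k) -> seq (Y * 'I_k))
    (s s' : seq (X * 'I_k)) p p' :
  (forall s, map snd (F s) = map snd s) ->
  (forall m s, take m (F s) = F (take m s)) ->
  alpha n s p = alpha n s' p' -> alpha n (F s) p = alpha n (F s') p'.
Proof.
move=> Fsnd Ftake E.
rewrite (alpha_eq_snd _ (esym (Fsnd s))) (alpha_eq_snd _ (esym (Fsnd s'))) -E.
set sh := shape _.
have Etake : take (sumn sh) s = take (sumn sh) s'.
  by rewrite -!flatten_reshape /sh alpha_reshape E alpha_reshape.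
by rewrite -(reshape_take_sumn sh (F s)) -(reshape_take_sumn sh (F s')) !Ftake Etake.
Qed.

End Blocks.

Lemma is_prefix_map (X Y : Type) (f : X -> Y) (l1 l2 : seq X) :
  is_prefix l1 l2 -> is_prefix (map f l1) (map f l2).
Proof. by move=> [w ->]; exists (map f w); rewrite map_cat. Qed.

Lemma comparable_is_prefix (X : Type) (l1 l2 : seq X) :
  Defs.comparable l1 l2 -> size l1 <= size l2 -> is_prefix l1 l2.
Proof.
case=> [P12 _ // | [w E21]]; rewrite E21 size_cat => le_size.
have /nilP -> : nilp w by rewrite /nilp; lia.
by exists [::]; rewrite !cats0.
Qed.

Section Prefixes.
Variable k : nat.

(* The first component of [delta u] is [delta_seq d (u.1)]; the default [d] of
   [nth] is never reached. *)
Definition delta_seq X (d : X * 'I_k) (s : seq (X * 'I_k)) : seq (Tcar k X * 'I_k) :=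
  [seq ((take i s, nth d s i), (nth d s i).2) | i <- iota 0 (size s)].

Lemma take_delta_seq X (d d' : X * 'I_k) s m :
  take m (delta_seq d s) = delta_seq d' (take m s).
Proof.
rewrite /delta_seq -map_take take_iota size_take_min.
apply/eq_in_map => i; rewrite mem_iota add0n => /andP [_ lt_i].
have [lt_im lt_is] : i < m /\ i < size s by lia.
by rewrite take_takel ?(ltnW lt_im) // nth_take // (set_nth_default d' d lt_is).
Qed.

Lemma delta_seq_default X (d d' : X * 'I_k) s : delta_seq d s = delta_seq d' s.
Proof.
have size_ds : size (delta_seq d s) <= size s by rewrite size_map size_iota.
by rewrite -(take_oversize size_ds) (take_delta_seq d d') take_size.
Qed.

Lemma delta_seq_rcons X (d : X * 'I_k) s x :
  delta_seq d (rcons s x) = rcons (delta_seq x s) ((s, x), x.2).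
Proof.
rewrite /delta_seq size_rcons -addn1 iotaD map_cat cats1 /= add0n.
rewrite nth_rcons ltnn eqxx -[rcons s x]cats1 take_size_cat //; congr rcons.
apply/eq_in_map => i; rewrite mem_iota add0n => /andP [_ lt_is].
by rewrite takel_cat ?(ltnW lt_is) // nth_cat lt_is (set_nth_default x d lt_is).
Qed.

Lemma tolist_delta X (u : Tcar k X) d : tolist (delta u) = delta_seq d (tolist u).
Proof. by case: u => s x; rewrite /tolist /= delta_seq_rcons. Qed.

Lemma tolist_Tmap X Y (f : X -> Y) (u : Tcar k X) :
  tolist (Tmap f u) = map (fun y => (f y.1, y.2)) (tolist u).
Proof. by rewrite /tolist map_rcons. Qed.

Lemma Tmap_comp X Y Z (g : Y -> Z) (f : X -> Y) (u : Tcar k X) :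
  Tmap g (Tmap f u) = Tmap (fun x => g (f x)) u.
Proof. by rewrite /Tmap /= -map_comp. Qed.

Lemma snd_delta_seq X (d : X * 'I_k) s : map snd (delta_seq d s) = map snd s.
Proof.
rewrite /delta_seq -map_comp -[in RHS](mkseq_nth d s) /mkseq -map_comp.
exact: eq_map.
Qed.

Lemma map_delta_seq X Y (f : X -> Y) (d : X * 'I_k) s :
  delta_seq (f d.1, d.2) (map (fun y => (f y.1, y.2)) s) =
  map (fun y => (Tmap f y.1, y.2)) (delta_seq d s).
Proof.
rewrite /delta_seq size_map -map_comp.
apply/eq_in_map => i; rewrite mem_iota add0n => /andP [_ lt_is].
by rewrite /= -map_take (nth_map d).
Qed.

Lemma delta_natural X Y (f : X -> Y) (u : Tcar k X) :
  delta (Tmap f u) = Tmap (Tmap f) (delta u).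
Proof. by case: u => s x; rewrite /delta /Tmap /= -map_delta_seq. Qed.

Lemma is_prefix_delta_seq X (d : X * 'I_k) l1 l2 :
  is_prefix l1 l2 -> is_prefix (delta_seq d l1) (delta_seq d l2).
Proof.
move=> [w ->]; exists (drop (size l1) (delta_seq d (l1 ++ w))).
have -> : delta_seq d l1 = take (size l1) (delta_seq d (l1 ++ w)).
  by rewrite (take_delta_seq d d) take_size_cat.
by rewrite cat_take_drop.
Qed.

Definition pebbles X (u : Tcar k X) : seq 'I_k := map snd (tolist u).

Lemma last_pebbles X (u : Tcar k X) p : last p (pebbles u) = u.2.2.
Proof. by rewrite /pebbles /tolist map_rcons last_rcons. Qed.

Lemma peb_condE X (u v : Tcar k X) :
  peb_cond u v <->
  (is_prefix (tolist u) (tolist v) -> u.2.2 \notin drop (size (tolist u)) (pebbles v)).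
Proof.
split=> [Hpeb [w0 Ev] | Hfresh w y [z Ev]].
  rewrite /pebbles Ev map_cat drop_size_cat ?size_map //; apply/negP => Hin.
  set i := index u.2.2 (map snd w0).
  have lt_i : i < size w0 by rewrite -(size_map snd) index_mem.
  apply: (Hpeb (take i w0) (nth u.2 w0 i)).
    by exists (drop i.+1 w0); rewrite Ev -catA cat_rcons -drop_nth // cat_take_drop.
  by rewrite -(nth_map u.2 u.2.2) // nth_index.
have Puv : is_prefix (tolist u) (tolist v) by exists (rcons w y ++ z); rewrite Ev catA.
move: (Hfresh Puv) => /[swap] <-.
by rewrite /pebbles Ev -catA map_cat drop_size_cat ?size_map // map_cat map_rcons
  mem_cat mem_rcons mem_head.
Qed.

Lemma peb_cond_eq_pebbles X Y (u v : Tcar k X) (u' v' : Tcar k Y) :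
  pebbles u' = pebbles u -> pebbles v' = pebbles v ->
  Defs.comparable (tolist u) (tolist v) -> peb_cond u v -> peb_cond u' v'.
Proof.
move=> Eu Ev Cuv; rewrite !peb_condE => Hfresh Pu'v'.
have size_tolist Z (w : Tcar k Z) : size (tolist w) = size (pebbles w) by rewrite size_map.
have Puv : is_prefix (tolist u) (tolist v).
  apply: comparable_is_prefix => //; case: Pu'v' => w Ev'.
  by rewrite !size_tolist -Eu -Ev -!size_tolist Ev' size_cat leq_addr.
by rewrite -(last_pebbles u' u.2.2) Eu last_pebbles size_tolist Eu Ev -size_tolist Hfresh.
Qed.

End Prefixes.

Section Quotient.
Variables k n : nat.

Lemma q_eq X (u v : Tcar k X) : approx n u v -> q n u = q n v.
Proof.
move=> [E1 E2]; apply: subset_eq_compat.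
apply: functional_extensionality => w; apply: propositional_extensionality.
by rewrite /approx E1 E2.
Qed.

Lemma approx_rep X (c : Hcar k n X) : proj1_sig c = approx n (rep c).
Proof. by rewrite /rep; case: constructive_indefinite_description. Qed.

Lemma q_rep X (c : Hcar k n X) : q n (rep c) = c.
Proof. by case: c => P P_class; apply: subset_eq_compat; rewrite -approx_rep. Qed.

Lemma rep_q X (u : Tcar k X) : approx n (rep (q n u)) u.
Proof. by have /= <- := approx_rep (q n u). Qed.

Lemma approx_Tmap X Y (g : X -> Y) (u v : Tcar k X) :
  approx n u v -> approx n (Tmap g u) (Tmap g v).
Proof.
move=> [E1 E2]; split; first by rewrite /= E1.
by apply: alpha_transfer E2 => [s | m s]; [rewrite -map_comp | rewrite map_take].
Qed.

Lemma Hmap_q X Y (g : X -> Y) (u : Tcar k X) : Hmap n g (q n u) = q n (Tmap g u).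
Proof. exact/q_eq/approx_Tmap/rep_q. Qed.

Lemma approx_delta X (u v : Tcar k X) :
  approx n u v -> approx n (Tmap (q n) (delta u)) (Tmap (q n) (delta v)).
Proof.
move=> uv; split; first exact: q_eq.
pose h (y : Tcar k X * 'I_k) := (q n y.1, y.2).
change (alpha n (map h (delta_seq u.2 u.1)) u.2.2 = alpha n (map h (delta_seq v.2 v.1)) v.2.2).
rewrite (delta_seq_default v.2 u.2).
case: uv => _; apply: (alpha_transfer (F := fun s => map h (delta_seq u.2 s))) => [s | m s].
  by rewrite -map_comp snd_delta_seq.
by rewrite -map_take (take_delta_seq u.2 u.2).
Qed.

Definition lift X Y (f : Tcar k X -> Y) (c : Hcar k n X) : Y := f (rep c).

Lemma lift_q X Y (f : Tcar k X -> Y) (u : Tcar k X) :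
  (forall v w, approx n v w -> f v = f w) -> lift f (q n u) = f u.
Proof. by move=> f_compat; apply/f_compat/rep_q. Qed.

Lemma eq_on_q X Y (F G : Hcar k n X -> Y) :
  (forall u, F (q n u) = G (q n u)) -> F = G.
Proof. by move=> FG; apply: functional_extensionality => c; rewrite -(q_rep c). Qed.

End Quotient.

Section Homomorphisms.
Variables (sg : signature) (k n : nat).

Lemma comp_hom (A B C : structure sg) (f : A -> B) (g : B -> C) :
  is_hom f -> is_hom g -> is_hom (fun x => g (f x)).
Proof. by move=> hf hg R t /hf /hg. Qed.

Lemma eps_hom (A : structure sg) : is_hom (A := T k A) (B := A) (@eps k A).
Proof. by move=> R t [_ []]. Qed.

Lemma q_hom (A : structure sg) : is_hom (A := T k A) (B := H k n A) (q n).
Proof. by move=> R t Rt; exists t. Qed.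

Lemma hom_quotient (A B : structure sg) (f : T k A -> B) (F : H k n A -> B) :
  (forall u, F (q n u) = f u) -> is_hom f -> is_hom F.
Proof.
move=> Ff hf R t [t' [t't Rt']].
have -> : (fun i => F (t i)) = (fun i => f (t' i)).
  by apply: functional_extensionality => i; rewrite -t't Ff.
exact: hf.
Qed.

(* The co-Kleisli extension of [g]: comparability and the pebble condition only
   see prefixes and pebble indices, both of which [delta] preserves. *)
Lemma Tmap_delta_hom (A B : structure sg) (g : T k A -> B) :
  is_hom g -> is_hom (A := T k A) (B := T k B) (fun u => Tmap g (delta u)).
Proof.
move=> hg R t [Ct [Rt Pt]].
pose h (y : Tcar k A * 'I_k) := (g y.1, y.2).
have tolist_gd u : tolist (Tmap g (delta u)) = map h (delta_seq u.2 (tolist u)).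
  by rewrite tolist_Tmap (tolist_delta u u.2).
have pebbles_gd u : pebbles (Tmap g (delta u)) = pebbles u.
  by rewrite /pebbles tolist_gd -map_comp snd_delta_seq.
split; [|split].
- move=> i j; rewrite /Defs.comparable !tolist_gd !(delta_seq_default (t j).2 (t i).2).
  by case: (Ct i j) => P; [left | right]; apply/is_prefix_map/is_prefix_delta_seq.
- exact: hg.
- by move=> i j; apply: peb_cond_eq_pebbles (Pt i j).
Qed.

End Homomorphisms.

Section Comonad.
Variables (sg : signature) (k n : nat).

Definition counit (A : structure sg) : H k n A -> A := lift (@eps k A).

Definition comult (A : structure sg) : H k n A -> H k n (H k n A) :=
  lift (fun u => q n (Tmap (q n) (delta u))).

Lemma counit_q (A : structure sg) (u : Tcar k A) : counit (q n u) = eps u.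
Proof. by apply: lift_q => v w []. Qed.

Lemma comult_q (A : structure sg) (u : Tcar k A) :
  comult (q n u) = q n (Tmap (q n) (delta u)).
Proof. by apply: lift_q => v w /approx_delta /q_eq. Qed.

Lemma counit_hom (A : structure sg) : is_hom (@counit A).
Proof. exact: hom_quotient (@counit_q A) (@eps_hom _ k A). Qed.

Lemma comult_hom (A : structure sg) : is_hom (@comult A).
Proof.
apply: hom_quotient (@comult_q A) _.
exact: comp_hom (Tmap_delta_hom (@q_hom _ k n A)) (@q_hom _ k n (H k n A)).
Qed.

Lemma counit_natural (A B : structure sg) (f : A -> B) (c : H k n A) :
  f (counit c) = counit (Hmap n f c).
Proof. by rewrite -(q_rep c) Hmap_q !counit_q. Qed.

Lemma comult_natural (A B : structure sg) (f : A -> B) (c : H k n A) :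
  Hmap n (Hmap n f) (comult c) = comult (Hmap n f c).
Proof.
rewrite -(q_rep c) Hmap_q !comult_q Hmap_q delta_natural !Tmap_comp.
by congr (q n (Tmap _ _)); apply: functional_extensionality => x; rewrite Hmap_q.
Qed.

Lemma counit_unique (A : structure sg) (e : H k n A -> A) :
  (forall u, eps u = e (q n u)) -> e = @counit A.
Proof. by move=> e_q; apply: eq_on_q => u; rewrite -e_q counit_q. Qed.

Lemma comult_unique (A : structure sg) (d : H k n A -> H k n (H k n A)) :
  (forall u, d (q n u) = q n (Tmap (q n) (delta u))) -> d = @comult A.
Proof. by move=> d_q; apply: eq_on_q => u; rewrite d_q comult_q. Qed.

End Comonad.

Theorem lemma3p11 (sg : signature) (n k : nat) (n_gt0 : 0 < n) (n_le_k : n <= k) :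
  (* (a) counit eps^{n,k} *)
  (forall A : structure sg,
     exists! e : H k n A -> A,
       is_hom e /\ forall u : Tcar k A, eps u = e (q n u)) /\
  (* (b) q_n o T_k q_n o delta is constant on ~_n-classes *)
  (forall (A : structure sg) (u v : Tcar k A),
     approx n u v ->
     q n (Tmap (q n) (delta u)) = q n (Tmap (q n) (delta v))) /\
  (* the induced comultiplication delta^{n,k} (a homomorphism) *)
  (forall A : structure sg,
     exists! d : H k n A -> H k n (H k n A),
       is_hom d /\ forall u : Tcar k A, d (q n u) = q n (Tmap (q n) (delta u))) /\
  (* naturality of eps^{n,k} *)
  (forall (A B : structure sg) (f : A -> B), is_hom f ->
     forall (eA : H k n A -> A) (eB : H k n B -> B),
       (forall u : Tcar k A, eps u = eA (q n u)) ->
       (forall u : Tcar k B, eps u = eB (q n u)) ->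
       forall c : H k n A, f (eA c) = eB (Hmap n f c)) /\
  (* naturality of delta^{n,k} *)
  (forall (A B : structure sg) (f : A -> B), is_hom f ->
     forall (dA : H k n A -> H k n (H k n A)) (dB : H k n B -> H k n (H k n B)),
       (forall u : Tcar k A, dA (q n u) = q n (Tmap (q n) (delta u))) ->
       (forall u : Tcar k B, dB (q n u) = q n (Tmap (q n) (delta u))) ->
       forall c : H k n A, Hmap n (Hmap n f) (dA c) = dB (Hmap n f c)).
Proof.
split; [|split; [|split; [|split]]].
- move=> A; exists (@counit _ k n A); split=> [|e [_ /counit_unique //]].
  by split=> [|u]; [exact: counit_hom | rewrite counit_q].
- by move=> A u v /approx_delta /q_eq.
- move=> A; exists (@comult _ k n A); split=> [|d [_ /comult_unique //]].
  by split=> [|u]; [exact: comult_hom | rewrite comult_q].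
- move=> A B f _ eA eB /counit_unique -> /counit_unique ->.
  exact: counit_natural.
- move=> A B f _ dA dB /comult_unique -> /comult_unique ->.
  exact: comult_natural.
Qed.
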